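(* Let $K$ be a field and let $I_A\subset K[x_1,\ldots,x_n]$ be a toric ideal of height $r\ge 3$ such that $\mathrm{bar}(I_A)\le 2r-2$. Then $I_A$ is radical splittable.
   Context: $A=\{{\bf a}_1,\ldots,{\bf a}_n\}\subset\mathbb{Z}^m$ is a vector configuration with $\ker_{\mathbb{Z}}(A)\cap\mathbb{N}^n=\{{\bf 0}\}$, where $\ker_{\mathbb{Z}}(A)=\{{\bf u}\in\mathbb{Z}^n\mid\sum u_i{\bf a}_i={\bf 0}\}$; $I_A$ is the kernel of $K[x_1,\ldots,x_n]\to K[t_1^{\pm1},\ldots,t_m^{\pm1}]$, $x_i\mapsto{\bf t}^{{\bf a}_i}$, and its height equals $\dim_{\mathbb{Q}}\ker_{\mathbb{Q}}(A)$. The binomial arithmetical rank $\mathrm{bar}(I_A)$ is the smallest $t$ such that there exist binomials $B_1,\ldots,B_t\in I_A$ with $I_A=\mathrm{rad}(B_1,\ldots,B_t)$. $I_A$ is radical splittable if there exist toric ideals $I_{A_1},I_{A_2}\subset K[x_1,\ldots,x_n]$ with $I_A=\mathrm{rad}(I_{A_1}+I_{A_2})$ and $I_{A_i}\ne I_A$ for $i=1,2$. *)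

From HB Require Import structures.
From mathcomp Require Import all_boot all_order all_algebra.
From mathcomp Require Import mpoly.
Set Implicit Arguments. Unset Strict Implicit. Unset Printing Implicit Defensive.
Import Order.TTheory GRing.Theory Num.Theory.
Local Open Scope ring_scope.

(* A vector configuration A = {a_1,...,a_n} in Z^m is an m x n integer
   matrix whose i-th column is a_i. *)

Definition Amul (m n : nat) (A : 'M[int]_(m, n)) (u : 'I_n -> nat)
  : {ffun 'I_m -> int} :=
  [ffun j => \sum_(i < n) A j i * (u i)%:Z].

Definition pointed_conf (m n : nat) (A : 'M[int]_(m, n)) : Prop :=
  forall u : 'I_n -> nat,
    (forall j : 'I_m, \sum_(i < n) A j i * (u i)%:Z = 0) ->
    forall i, u i = 0%N.

(* The image of f under x_i |-> t^{a_i}, as a finitely supported function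
   Z^m -> K (a Laurent polynomial in t_1..t_m): the coefficient of t^b. *)
Definition toric_image (K : fieldType) (m n : nat) (A : 'M[int]_(m, n))
  (f : {mpoly K[n]}) (b : {ffun 'I_m -> int}) : K :=
  \sum_(c <- msupp f | Amul A (fun i => c i) == b) f@_c.

Definition toric_ideal (K : fieldType) (m n : nat) (A : 'M[int]_(m, n))
  (f : {mpoly K[n]}) : Prop :=
  forall b : {ffun 'I_m -> int}, toric_image A f b = 0.

(* height of I_A = dim_Q ker_Q(A) = n - rank_Q(A) *)
Definition toric_height (m n : nat) (A : 'M[int]_(m, n)) : nat :=
  (n - \rank (map_mx (intr : int -> rat) A))%N.

Definition is_binomial (K : fieldType) (n : nat) (p : {mpoly K[n]}) : Prop :=
  exists u v : 'X_{1..n}, p = 'X_[u] - 'X_[v].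

Definition ideal_gen (K : fieldType) (n t : nat) (B : 'I_t -> {mpoly K[n]})
  (f : {mpoly K[n]}) : Prop :=
  exists g : 'I_t -> {mpoly K[n]}, f = \sum_(i < t) g i * B i.

Definition ideal_sum (K : fieldType) (n : nat)
  (I J : {mpoly K[n]} -> Prop) (f : {mpoly K[n]}) : Prop :=
  exists g h, I g /\ J h /\ f = g + h.

Definition radical (K : fieldType) (n : nat) (I : {mpoly K[n]} -> Prop)
  (f : {mpoly K[n]}) : Prop :=
  exists k : nat, I (f ^+ k).

Definition same_ideal (K : fieldType) (n : nat) (I J : {mpoly K[n]} -> Prop)
  : Prop := forall f, I f <-> J f.

(* bar(I_A) <= k : there are t <= k binomials in I_A whose radical is I_A
   (bar is the least such t). *)
Definition bar_le (K : fieldType) (m n : nat) (A : 'M[int]_(m, n)) (k : nat)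
  : Prop :=
  exists t : nat, (t <= k)%N /\
    exists B : 'I_t -> {mpoly K[n]},
      (forall i, is_binomial (B i) /\ toric_ideal A (B i)) /\
      same_ideal (toric_ideal A) (radical (ideal_gen B)).

Definition radical_splittable (K : fieldType) (m n : nat) (A : 'M[int]_(m, n))
  : Prop :=
  exists (m1 m2 : nat) (A1 : 'M[int]_(m1, n)) (A2 : 'M[int]_(m2, n)),
    pointed_conf A1 /\ pointed_conf A2 /\
    same_ideal (toric_ideal A)
      (radical (ideal_sum (@toric_ideal K m1 n A1) (@toric_ideal K m2 n A2))) /\
    ~ same_ideal (@toric_ideal K m1 n A1) (toric_ideal A) /\
    ~ same_ideal (@toric_ideal K m2 n A2) (toric_ideal A).

(* Write the t <= 2r - 2 binomials as x^u_j - x^v_j and split them into two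
   groups of at most r - 1.  The differences u_j - v_j of one group span a
   subspace of ker_Q(A) of dimension < r = dim ker_Q(A), so some integral
   linear form C vanishes on them but not on ker A.  Appending C to A as a new
   row gives a configuration A_C with ker A_C strictly inside ker A, hence
   I_{A_C} is strictly smaller than I_A, yet I_{A_C} still contains the
   binomials of that group.  So every B_j lies in I_{A_1} + I_{A_2}, whence
   I_A = rad(B) = rad(I_{A_1} + I_{A_2}).  The argument only needs r >= 1. *)

From HB Require Import structures.
From mathcomp Require Import all_boot all_order all_algebra.
From mathcomp Require Import mpoly zify.
Set Implicit Arguments. Unset Strict Implicit. Unset Printing Implicit Defensive.
Import Order.TTheory GRing.Theory Num.Theory.
Local Open Scope ring_scope.

Lemma big_partition_undup (V : nmodType) (I J : eqType) (s : seq I) (P : pred I)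
    (g : I -> J) (F : I -> V) :
  \sum_(i <- s | P i) F i =
  \sum_(y <- undup (map g s)) \sum_(i <- s | P i && (g i == y)) F i.
Proof.
rewrite -(exchange_big_dep predT) //= big_seq_cond [RHS]big_seq_cond.
apply: eq_bigr => i /andP [i_s _]; rewrite -big_filter.
have -> : [seq y <- undup (map g s) | g i == y] = [:: g i].
  rewrite -(@filter_pred1_uniq _ (undup (map g s)) (g i)) ?undup_uniq //.
    by apply: eq_filter => y; rewrite eq_sym.
  by rewrite mem_undup map_f.
by rewrite big_seq1.
Qed.

Section MonomialLinear.
Variables (R : comNzRingType) (n : nat) (G : 'X_{1..n} -> R).
Implicit Types (f g : {mpoly R[n]}).

Definition mlin f : R := \sum_(c <- msupp f) f@_c * G c.

Lemma mlinE_seq (s : seq 'X_{1..n}) f : uniq s -> {subset msupp f <= s} ->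
  mlin f = \sum_(c <- s) f@_c * G c.
Proof.
move=> s_uniq f_s; rewrite (bigID (mem (msupp f))) /=.
rewrite [X in _ + X]big1 ?addr0 => [|c /memN_msupp_eq0 ->]; last by rewrite mul0r.
rewrite -big_filter; apply/perm_big/uniq_perm; rewrite ?filter_uniq ?msupp_uniq //.
by move=> c; rewrite mem_filter andb_idr //; apply: f_s.
Qed.

Lemma mlin_is_additive : zmod_morphism mlin.
Proof.
move=> f g; pose s := undup (msupp f ++ msupp g).
have s_uniq : uniq s by apply: undup_uniq.
have sf : {subset msupp f <= s} by move=> c cf; rewrite mem_undup mem_cat cf.
have sg : {subset msupp g <= s} by move=> c cg; rewrite mem_undup mem_cat cg orbT.
have sfg : {subset msupp (f - g) <= s} by move=> c /msuppB_le; rewrite mem_undup.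
rewrite (mlinE_seq s_uniq sf) (mlinE_seq s_uniq sg) (mlinE_seq s_uniq sfg).
by rewrite -sumrB; apply: eq_bigr => c _; rewrite mcoeffB mulrBl.
Qed.

HB.instance Definition _ := GRing.isZmodMorphism.Build _ _ mlin mlin_is_additive.

Lemma mlinZ a f : mlin (a *: f) = a * mlin f.
Proof.
rewrite (@mlinE_seq (msupp f)) ?msupp_uniq //; last exact: msuppZ_le.
by rewrite mulr_sumr; apply: eq_bigr => c _; rewrite mcoeffZ mulrA.
Qed.

Lemma mlinX c : mlin 'X_[c] = G c.
Proof. by rewrite /mlin msuppX big_seq1 mcoeffX eqxx mul1r. Qed.

End MonomialLinear.

Lemma eq_mlin (R : comNzRingType) n (G1 G2 : 'X_{1..n} -> R) f :
  G1 =1 G2 -> mlin G1 f = mlin G2 f.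
Proof. by move=> eqG; apply: eq_bigr => c _; rewrite eqG. Qed.

Lemma mlinMX (R : comNzRingType) n (G : 'X_{1..n} -> R) c f :
  mlin G ('X_[c] * f) = mlin (fun d => G (c + d)%MM) f.
Proof.
rewrite {1}(mpolyE f) mulr_sumr raddf_sum /=; apply: eq_bigr => d _.
by rewrite -scalerAr mlinZ -mpolyXD mlinX.
Qed.

Section Ideals.
Variables (K : fieldType) (n : nat).
Implicit Types (f g : {mpoly K[n]}).

Record is_ideal (I : {mpoly K[n]} -> Prop) : Prop := IsIdeal {
  ideal0 : I 0;
  idealD : forall f g, I f -> I g -> I (f + g);
  idealMl : forall g f, I f -> I (g * f)
}.

Lemma ideal_big (I : {mpoly K[n]} -> Prop) (T : Type) (r : seq T) (P : pred T) F :
  is_ideal I -> (forall i, P i -> I (F i)) -> I (\sum_(i <- r | P i) F i).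
Proof. by move=> [I0 ID _] IF; elim/big_ind: _. Qed.

Lemma radical_split (I J1 J2 : {mpoly K[n]} -> Prop) t (B : 'I_t -> {mpoly K[n]})
    (p : pred 'I_t) :
  is_ideal I -> is_ideal J1 -> is_ideal J2 ->
  (forall f, J1 f -> I f) -> (forall f, J2 f -> I f) ->
  (forall j, p j -> J1 (B j)) -> (forall j, ~~ p j -> J2 (B j)) ->
  same_ideal I (radical (ideal_gen B)) ->
  same_ideal I (radical (ideal_sum J1 J2)).
Proof.
move=> idI idJ1 idJ2 J1I J2I BJ1 BJ2 IB f; split.
- move=> /IB [k [g fk]]; exists k.
  exists (\sum_(j < t | p j) g j * B j), (\sum_(j < t | ~~ p j) g j * B j).
  split; first by apply: ideal_big => // j /BJ1; apply: (idealMl idJ1).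
  split; first by apply: ideal_big => // j /BJ2; apply: (idealMl idJ2).
  by rewrite fk (bigID p).
- move=> [k [g [h [Jg [Jh fk]]]]].
  have /IB [l [c fkl]] : I (f ^+ k).
    by rewrite fk; apply: (idealD idI); [apply: J1I | apply: J2I].
  by apply/IB; exists (k * l)%N, c; rewrite exprM.
Qed.

End Ideals.

Definition Amnm m n (A : 'M[int]_(m, n)) (c : 'X_{1..n}) := Amul A (fun i => c i).

Lemma AmnmD m n (A : 'M[int]_(m, n)) c d :
  Amnm A (c + d)%MM = Amnm A c + Amnm A d.
Proof.
apply/ffunP => j; rewrite !ffunE -big_split; apply: eq_bigr => i _.
by rewrite mnmDE PoszD mulrDr.
Qed.

Section ToricIdeal.
Variables (K : fieldType) (n m : nat) (A : 'M[int]_(m, n)).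
Implicit Types (f g : {mpoly K[n]}).

Lemma toric_imageE f b : toric_image A f b = mlin (fun c => (Amnm A c == b)%:R) f.
Proof.
rewrite /toric_image big_mkcond; apply: eq_bigr => c _.
by case: eqP; rewrite ?mulr1 ?mulr0.
Qed.

Lemma toric_image_mulX c f b :
  toric_image A ('X_[c] * f) b = toric_image A f (b - Amnm A c).
Proof.
rewrite !toric_imageE mlinMX; apply: eq_mlin => d.
by rewrite AmnmD [in RHS]eq_sym subr_eq addrC eq_sym.
Qed.

Lemma toric_ideal_is_ideal : is_ideal (@toric_ideal K m n A).
Proof.
split=> [b | f g If Ig b | g f If b]; rewrite toric_imageE.
- by rewrite raddf0.
- by rewrite raddfD /= -!toric_imageE If Ig addr0.
rewrite (mpolyE g) mulr_suml raddf_sum big1 //= => c _.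
by rewrite -scalerAl mlinZ -toric_imageE toric_image_mulX If mulr0.
Qed.

Lemma toric_binomialP u v :
  toric_ideal A ('X_[u] - 'X_[v] : {mpoly K[n]}) <-> Amnm A u = Amnm A v.
Proof.
have imageE b : toric_image A ('X_[u] - 'X_[v] : {mpoly K[n]}) b =
    (Amnm A u == b)%:R - (Amnm A v == b)%:R.
  by rewrite toric_imageE raddfB /= !mlinX.
split=> [/(_ (Amnm A u)) | Auv b]; last by rewrite imageE Auv subrr.
by rewrite imageE eqxx; case: eqP => // _ /eqP; rewrite subr0 oner_eq0.
Qed.

End ToricIdeal.

Lemma toric_ideal_refine (K : fieldType) n m1 m2 (A1 : 'M[int]_(m1, n))
    (A2 : 'M[int]_(m2, n)) (f : {mpoly K[n]}) :
  (forall c d, Amnm A1 c = Amnm A1 d -> Amnm A2 c = Amnm A2 d) ->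
  toric_ideal A1 f -> toric_ideal A2 f.
Proof.
move=> A12 If b; rewrite /toric_image (big_partition_undup _ _ (Amnm A1)).
rewrite big_seq big1 // => y; rewrite mem_undup => /mapP [c0 _ ->].
have [<- | A2c0b] := eqVneq (Amnm A2 c0) b; last first.
  rewrite big_pred0 // => c; apply/andP => -[/eqP A2cb /eqP /A12 A2c].
  by rewrite -A2c -A2cb eqxx in A2c0b.
rewrite -[RHS](If (Amnm A1 c0)); apply: eq_bigl => c.
by apply: andb_idl => /eqP /A12 /eqP A2c; exact: A2c.
Qed.

Lemma exists_separating_functional (F : fieldType) m n k (M : 'M[F]_(m, n))
    (W : 'M[F]_(n, k)) :
  (k + \rank M < n)%N ->
  exists (c : 'rV_n) (z : 'cV_n), [/\ c *m W = 0, M *m z = 0 & c *m z != 0].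
Proof.
move=> kMn; set KN := kermx W *m cokermx M.
have : KN != 0.
  rewrite -submxE; apply: contraTN kMn => /mxrankS; rewrite mxrank_ker.
  by have := rank_leq_col W; lia.
case/matrix0Pn => i [j KNij]; exists (row i (kermx W)), (col j (cokermx M)).
have colM (N : 'M[F]_(n, n)) P : P *m col j N = col j (P *m N).
  by rewrite !colE mulmxA.
split; first by rewrite -row_mul mulmx_ker row0.
  by rewrite colM mulmx_coker col0.
by apply/matrix0Pn; exists 0, 0; rewrite -row_mul colM -/KN 2!mxE.
Qed.

Lemma int_scaled_mx p q (M : 'M[rat]_(p, q)) :
  exists2 d : int, d != 0 & exists Mi : 'M[int]_(p, q), map_mx intr Mi = d%:~R *: M.
Proof.
pose d := \prod_(ij : 'I_p * 'I_q) denq (M ij.1 ij.2).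
exists d; first by rewrite prodf_seq_neq0; apply/allP => ij _; rewrite denq_neq0.
exists (\matrix_(i, j) (numq (M i j) *
   \prod_(ij : 'I_p * 'I_q | ij != (i, j)) denq (M ij.1 ij.2))).
apply/matrixP => i j; rewrite !mxE (intrM rat) numqE /d [in RHS](bigD1 (i, j)) //=.
by rewrite rmorphM /= [RHS]mulrC mulrA.
Qed.

Definition mnm_col n (u : 'X_{1..n}) : 'cV[rat]_n := \col_i (u i)%:R.

Lemma mnm_col_sub n (z : 'cV[int]_n) :
  exists u v : 'X_{1..n}, mnm_col u - mnm_col v = map_mx intr z.
Proof.
pose part (b : bool) :=
  [multinom (if (0 <= z i ord0)%R == b then `|z i ord0| else 0) | i < n].
exists (part true), (part false); apply/matrixP => i j; rewrite [j]ord1 !mxE !mnmE.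
case: (lerP 0 (z i 0)) => z_sign /=; rewrite natr_absz.
  by rewrite subr0 ger0_norm.
by rewrite sub0r ltr0_norm // rmorphN opprK.
Qed.

Lemma Amnm_eqP m n (A : 'M[int]_(m, n)) u v :
  Amnm A u = Amnm A v <->
  map_mx intr A *m (mnm_col u - mnm_col v) = 0 :> 'cV[rat]_m.
Proof.
have entryE j : (map_mx intr A *m (mnm_col u - mnm_col v)) j 0 =
    (Amnm A u j - Amnm A v j)%:~R.
  rewrite !mxE /Amnm !ffunE -sumrB rmorph_sum; apply: eq_bigr => i _.
  by rewrite !mxE -mulrBr rmorphM /= rmorphB /= !pmulrn.
split=> [Auv | /matrixP A0].
  by apply/matrixP => j k; rewrite ord1 entryE Auv subrr mxE.
by apply/ffunP => j; apply/eqP; rewrite -subr_eq0 -(intr_eq0 rat) -entryE A0 mxE.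
Qed.

Lemma separating_row m n (A : 'M[int]_(m, n)) (s : seq 'cV[rat]_n) :
  (size s + \rank (map_mx (intr : int -> rat) A) < n)%N ->
  exists C : 'rV[int]_n,
    (forall w, w \in s -> map_mx (intr : int -> rat) C *m w = 0) /\
    exists u v, Amnm A u = Amnm A v /\ Amnm C u <> Amnm C v.
Proof.
move=> sAn; pose W : 'M[rat]_(n, size s) := \matrix_(l, i) s`_i l 0.
have [c [z [cW Az cz]]] := exists_separating_functional W sAn.
have [d d0 [C dC]] := int_scaled_mx c.
have [e e0 [zi ez]] := int_scaled_mx z.
have [u [v uv]] := mnm_col_sub zi.
exists C; split=> [w ws | ].
  have ws_lt : (index w s < size s)%N by rewrite index_mem.
  have -> : w = col (Ordinal ws_lt) W.
    by apply/matrixP => l k; rewrite ord1 !mxE nth_index.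
  by rewrite dC -scalemxAl colE mulmxA cW mul0mx scaler0.
exists u, v; split; first by apply/Amnm_eqP; rewrite uv ez -scalemxAr Az scaler0.
move/Amnm_eqP; rewrite uv ez dC -scalemxAr -scalemxAl => /eqP.
by rewrite !scaler_eq0 !intr_eq0 (negbTE d0) (negbTE e0) (negbTE cz).
Qed.

Section ColMx.
Variables (m1 m2 n : nat) (A : 'M[int]_(m1, n)) (C : 'M[int]_(m2, n)).

Lemma Amnm_col_mx u v :
  Amnm (col_mx A C) u = Amnm (col_mx A C) v <->
  Amnm A u = Amnm A v /\ Amnm C u = Amnm C v.
Proof.
have up w j : Amnm (col_mx A C) w (lshift m2 j) = Amnm A w j.
  by rewrite !ffunE; apply: eq_bigr => i _; rewrite col_mxEu.
have down w j : Amnm (col_mx A C) w (rshift m1 j) = Amnm C w j.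
  by rewrite !ffunE; apply: eq_bigr => i _; rewrite col_mxEd.
split=> [ACuv | [Auv Cuv]]; last first.
  by apply/ffunP => j; case: (split_ordP j) => k ->; rewrite ?up ?down ?Auv ?Cuv.
by split; apply/ffunP => j; rewrite -?up -?down ACuv.
Qed.

Lemma pointed_conf_col_mx : pointed_conf A -> pointed_conf (col_mx A C).
Proof.
move=> A_pointed u Au0; apply: A_pointed => j; have := Au0 (lshift m2 j).
by under eq_bigr do rewrite col_mxEu.
Qed.

Lemma toric_ideal_col_mx (K : fieldType) (f : {mpoly K[n]}) :
  toric_ideal (col_mx A C) f -> toric_ideal A f.
Proof. by apply: toric_ideal_refine => u v /Amnm_col_mx []. Qed.

Lemma toric_binomial_col_mx (K : fieldType) u v :
  Amnm A u = Amnm A v ->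
  map_mx (intr : int -> rat) C *m (mnm_col u - mnm_col v) = 0 ->
  toric_ideal (col_mx A C) ('X_[u] - 'X_[v] : {mpoly K[n]}).
Proof. by move=> Auv /Amnm_eqP Cuv; apply/toric_binomialP/Amnm_col_mx. Qed.

Lemma toric_ideal_col_mx_neq (K : fieldType) u v :
  Amnm A u = Amnm A v -> Amnm C u <> Amnm C v ->
  ~ same_ideal (@toric_ideal K _ _ (col_mx A C)) (toric_ideal A).
Proof.
move=> Auv Cuv IA; apply: Cuv.
have /(IA _)/(toric_binomialP K)/Amnm_col_mx [] // := proj2 (toric_binomialP K A u v) Auv.
Qed.

End ColMx.

Theorem theorem2p5 (K : fieldType) (m n : nat) (A : 'M[int]_(m, n)) :
  pointed_conf A ->
  (3 <= toric_height A)%N ->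
  bar_le K A (2 * toric_height A - 2) ->
  radical_splittable K A.
Proof.
move=> A_pointed r_ge3 [t [t_le [B [B_bin IB]]]].
have /fin_all_exists [uv Buv] :
    forall j, exists uv : 'X_{1..n} * 'X_{1..n}, B j = 'X_[uv.1] - 'X_[uv.2].
  by move=> j; have [[u [v ->]] _] := B_bin j; exists (u, v).
have Auv j : Amnm A (uv j).1 = Amnm A (uv j).2.
  by apply/(toric_binomialP K); rewrite -Buv; case: (B_bin j).
pose w j := mnm_col (uv j).1 - mnm_col (uv j).2.
pose ws := [seq w j | j <- enum 'I_t].
have size_ws : size ws = t by rewrite size_map size_enum_ord.
set k := (toric_height A).-1.
have small1 : (size (take k ws) + \rank (map_mx (intr : int -> rat) A) < n)%N.
  by rewrite size_take_min /k /toric_height in r_ge3 *; lia.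
have small2 : (size (drop k ws) + \rank (map_mx (intr : int -> rat) A) < n)%N.
  by rewrite size_drop size_ws /k /toric_height in t_le r_ge3 *; lia.
have [C1 [C1w [u1 [v1 [Auv1 Cuv1]]]]] := separating_row small1.
have [C2 [C2w [u2 [v2 [Auv2 Cuv2]]]]] := separating_row small2.
exists (m + 1)%N, (m + 1)%N, (col_mx A C1), (col_mx A C2).
do 2!(split; first exact: pointed_conf_col_mx).
split; last by split; [apply: toric_ideal_col_mx_neq Auv1 Cuv1 |
                       apply: toric_ideal_col_mx_neq Auv2 Cuv2].
apply: (radical_split (p := fun j => w j \in take k ws)) IB;
  try exact: toric_ideal_is_ideal; try exact: toric_ideal_col_mx.
- by move=> j /C1w C1j; rewrite Buv; apply: toric_binomial_col_mx.
move=> j wj; rewrite Buv; apply: toric_binomial_col_mx (Auv j) (C2w _ _).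
have : w j \in take k ws ++ drop k ws by rewrite cat_take_drop map_f ?mem_enum.
by rewrite mem_cat (negbTE wj).
Qed.
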